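(* Let $m,n,a,b$ be positive integers with $a<m$, $b<n$, and let $A$ be the $m\times n$ array whose empty cells are exactly those in $I_1\times I_2$, where $I_1=[m-a+1,m]$ and $I_2$ is either $[1,b]$ or $[n-b+1,n]$. If $\gcd(m,n)=a+b$ and $\gcd(a,b)=1$, then the bishop is a solution to $T(A)$.
   Context: Arrays are toroidal (row indices mod $m$, column indices mod $n$); $F(A)$ is the set of filled cells. $s_R(i,j)=(i,j+t)$, $s_C(i,j)=(i+t,j)$ with $t\ge1$ minimal such that the cell is filled. The bishop's move is $s_C\circ s_R$. A move function is a solution to $T(A)$ if it is a permutation of $F(A)$ forming a single cycle of length $|F(A)|$. *)

(* Cells of the m x n toroidal array are pairs (i,j) of
   naturals with i < m, j < n (0-based: paper's row r is i = r-1). *)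
From mathcomp Require Import all_boot.
Set Implicit Arguments. Unset Strict Implicit. Unset Printing Implicit Defensive.

Definition cell := (nat * nat)%type.

Definition filledA (m n a b : nat) (left : bool) (c : cell) : bool :=
  [&& c.1 < m, c.2 < n &
      ~~ ((m - a <= c.1) && (if left then c.2 < b else n - b <= c.2))].

Definition sR (m n : nat) (F : cell -> bool) (c : cell) : cell :=
  let t := head n [seq t <- iota 1 n | F (c.1, (c.2 + t) %% n)] in
  (c.1, (c.2 + t) %% n).

Definition sC (m n : nat) (F : cell -> bool) (c : cell) : cell :=
  let t := head m [seq t <- iota 1 m | F ((c.1 + t) %% m, c.2)] in
  ((c.1 + t) %% m, c.2).

Definition bishop (m n : nat) (F : cell -> bool) (c : cell) : cell :=
  sC m n F (sR m n F c).

(* f is a solution to T(A): a permutation of F(A) forming a single cycle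
   of length |F(A)| (i.e. F(A) is one orbit of f). *)
Definition is_solution (F : cell -> bool) (f : cell -> cell) : Prop :=
  [/\ forall x, F x -> F (f x),
      forall x y, F x -> F y -> f x = f y -> x = y &
      forall x y, F x -> F y -> exists k, iter k f x = y].

(* Both shifts send a filled cell to the next filled cell of its row, resp.
   column, cyclically; hence they, and the bishop, permute the filled cells of
   any array, and on this finite set reachability under the bishop is
   symmetric.  If row 0 is full, every move either goes down or wraps to row 0,
   so every filled cell reaches row 0 and it suffices that the orbit of (0,0)
   contains row 0.
   With the empty block in the bottom-left corner, the bishop leaving (0,j)
   first returns to row 0 at column j + m mod n, except that columns in [0,d),
   d = a + b, get rotated by b inside [0,d).  Write m = m'd and n = n'd with
   gcd(m',n') = 1: from r < d the next n' - 1 returns avoid [0,d) and the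
   n'-th one is at r + b mod d.  As gcd(b,d) = gcd(a,b) = 1, the orbit of 0
   covers row 0.  The bottom-right block is conjugate to the bottom-left one
   by the column rotation j |-> j + b. *)

From mathcomp Require Import all_boot zify.

Set Implicit Arguments.
Unset Strict Implicit.
Unset Printing Implicit Defensive.

Definition reach {T : Type} (f : T -> T) (x y : T) := exists k, iter k f x = y.

Lemma reach_refl {T : Type} (f : T -> T) x : reach f x x.
Proof. by exists 0. Qed.

Lemma reach_step {T : Type} (f : T -> T) x : reach f x (f x).
Proof. by exists 1. Qed.

Lemma reach_trans {T : Type} (f : T -> T) y x z :
  reach f x y -> reach f y z -> reach f x z.
Proof. by move=> [k <-] [l <-]; exists (l + k); rewrite iterD. Qed.

Section FiniteOrbits.

Variables (T : eqType) (f : T -> T) (F : pred T) (s : seq T).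
Hypothesis F_fin : forall x, F x -> x \in s.
Hypothesis f_closed : forall x, F x -> F (f x).
Hypothesis f_inj : {in F &, injective f}.

Lemma iter_closed k x : F x -> F (iter k f x).
Proof. by move=> Fx; elim: k => //= k; apply: f_closed. Qed.

Lemma iter_inj k : {in F &, injective (iter k f)}.
Proof.
elim: k => // k IHk x y Fx Fy /= /f_inj eq_k.
by apply: IHk; rewrite // eq_k //; apply: iter_closed.
Qed.

Lemma iter_period x : F x -> exists2 p, 0 < p & iter p f x = x.
Proof.
move=> Fx; have: looping f x (size s).
  rewrite -[looping _ _ _]negbK -looping_uniq; apply/negP => /uniq_leq_size le_s.
  suff: (size s).+1 <= size s by rewrite ltnn.
  rewrite -[X in X <= _](size_traject f x); apply: le_s => _ /trajectP[i _ ->].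
  exact/F_fin/iter_closed.
move=> /trajectP[i lt_i_s eq_i]; exists (size s - i); first by rewrite subn_gt0.
apply: (@iter_inj i); [exact: iter_closed | done |].
by rewrite -iterD subnKC ?eq_i // ltnW.
Qed.

Lemma reach_sym x y : F x -> reach f x y -> reach f y x.
Proof.
move=> Fx [k <-]; have [p p_gt0 iter_p] := iter_period Fx.
have iter_kp : iter (k * p) f x = x.
  by elim: k => //= k IHk; rewrite mulSn iterD IHk iter_p.
exists (k * p - k); rewrite -iterD subnK ?iter_kp //.
by rewrite leq_pmulr.
Qed.

End FiniteOrbits.

Lemma head_filter_iota (Q : pred nat) d i k t : i <= t < i + k -> Q t ->
  (forall s, i <= s < t -> ~~ Q s) -> head d [seq x <- iota i k | Q x] = t.
Proof.
elim: k i => [|k IHk] i t_range Qt before_t /=; first by lia.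
have [lt_i_t | ge_i_t] := ltnP i t.
  have /negbTE -> : ~~ Q i by apply: before_t; lia.
  apply: IHk => // [|s s_range]; first lia.
  by apply: before_t; lia.
have eq_it : i = t by lia.
by rewrite eq_it Qt.
Qed.

Definition cnext (n : nat) (P : pred nat) (j : nat) : nat :=
  (j + head n [seq t <- iota 1 n | P ((j + t) %% n)]) %% n.

Section CyclicNext.

Variables (n : nat) (P : pred nat).

Lemma cnext_eq j t : 0 < t <= n -> P ((j + t) %% n) ->
  (forall s, 0 < s < t -> ~~ P ((j + s) %% n)) -> cnext n P j = (j + t) %% n.
Proof.
move=> t_range Pt before_t; rewrite /cnext (@head_filter_iota _ _ _ _ t) //; lia.
Qed.

Lemma cnextP j : j < n -> P j ->
  exists2 t, 0 < t <= n & [/\ cnext n P j = (j + t) %% n, P ((j + t) %% n)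
                            & forall s, 0 < s < t -> ~~ P ((j + s) %% n)].
Proof.
move=> lt_j_n Pj; pose Q t := [&& 0 < t, t <= n & P ((j + t) %% n)].
have exQ : exists t, Q t by exists n; rewrite /Q modnDr modn_small // Pj; lia.
case: (ex_minnP exQ) => t /and3P[t_gt0 le_t_n Pt] t_min.
have before_t s : 0 < s < t -> ~~ P ((j + s) %% n).
  move=> s_range; apply/negP => Ps.
  by have := t_min s; rewrite /Q Ps; lia.
exists t; first by rewrite t_gt0.
by split; rewrite // (@cnext_eq j t) ?t_gt0.
Qed.

Lemma cnext_lt j : 0 < n -> cnext n P j < n.
Proof. exact: ltn_pmod. Qed.

Lemma cnext_mem j : j < n -> P j -> P (cnext n P j).
Proof. by move=> lt_j_n Pj; have [t _ [-> Pt _]] := cnextP lt_j_n Pj. Qed.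

Lemma cnext_succ j : 0 < n -> P ((j + 1) %% n) -> cnext n P j = (j + 1) %% n.
Proof. by move=> n_gt0 P1; apply: cnext_eq => // s; lia. Qed.

Lemma first_hit_inj j j' t t' : j < n -> j' < n -> P j -> 0 < t <= t' ->
  (forall s, 0 < s < t' -> ~~ P ((j' + s) %% n)) ->
  (j + t) %% n = (j' + t') %% n -> j = j'.
Proof.
move=> lt_j_n lt_j'_n Pj /andP[t_gt0 le_t_t'] before_t' /eqP.
rewrite -(subnK le_t_t') addnA eqn_modDr => /eqP eq_j.
have [eq_tt' | ne_tt'] := eqVneq (t' - t) 0.
  by move: eq_j; rewrite eq_tt' addn0 !modn_small.
by have := before_t' (t' - t); rewrite -eq_j modn_small // Pj; lia.
Qed.

Lemma cnext_inj j j' : j < n -> j' < n -> P j -> P j' ->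
  cnext n P j = cnext n P j' -> j = j'.
Proof.
move=> lt_j_n lt_j'_n Pj Pj'.
have [t t_range [-> _ before_t]] := cnextP lt_j_n Pj.
have [t' t'_range [-> _ before_t']] := cnextP lt_j'_n Pj'.
have [le_t_t' | lt_t'_t] := leqP t t'.
  by apply: (first_hit_inj lt_j_n lt_j'_n Pj _ before_t'); lia.
have t'_le_t : 0 < t' <= t by lia.
by move/esym/(first_hit_inj lt_j'_n lt_j_n Pj' t'_le_t before_t).
Qed.

Lemma cnext_ext (Q : pred nat) j : {in gtn n, P =1 Q} -> cnext n P j = cnext n Q j.
Proof.
move=> eq_PQ; rewrite /cnext; congr ((j + head _ _) %% n).
case: n eq_PQ => [|k] eq_PQ //; apply: eq_filter => t.
by apply: eq_PQ; rewrite inE ltn_pmod.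
Qed.

End CyclicNext.

Lemma cnext_shift n (P : pred nat) j s :
  cnext n P ((j + s) %% n) = (cnext n (fun i => P ((i + s) %% n)) j + s) %% n.
Proof.
rewrite /cnext; set t := head _ _; set t' := head _ _.
have -> : t = t'.
  by congr head; apply: eq_filter => u; rewrite !modnDml addnAC.
by rewrite !modnDml addnAC.
Qed.

Section BishopPermutation.

Variables (m n : nat) (F : pred cell).
Hypothesis F_box : forall c, F c -> c.1 < m /\ c.2 < n.

Lemma sR_cnext c : sR m n F c = (c.1, cnext n (fun j => F (c.1, j)) c.2).
Proof. by []. Qed.

Lemma sC_cnext c : sC m n F c = (cnext m (fun i => F (i, c.2)) c.1, c.2).
Proof. by []. Qed.

Lemma sR_closed c : F c -> F (sR m n F c).
Proof.
case: c => i j Fc; have [_ /= lt_j_n] := F_box Fc.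
exact: (@cnext_mem n (fun j => F (i, j))).
Qed.

Lemma sC_closed c : F c -> F (sC m n F c).
Proof.
case: c => i j Fc; have [/= lt_i_m _] := F_box Fc.
exact: (@cnext_mem m (fun i => F (i, j))).
Qed.

Lemma sR_inj : {in F &, injective (sR m n F)}.
Proof.
move=> [i j] [i' j'] Fc Fc'; have [_ lt_j_n] := F_box Fc; have [_ lt_j'_n] := F_box Fc'.
rewrite !sR_cnext /= => -[eq_i eq_next]; subst i'; congr pair.
exact: (@cnext_inj n (fun j => F (i, j)) _ _ lt_j_n lt_j'_n Fc Fc').
Qed.

Lemma sC_inj : {in F &, injective (sC m n F)}.
Proof.
move=> [i j] [i' j'] Fc Fc'; have [lt_i_m _] := F_box Fc; have [lt_i'_m _] := F_box Fc'.
rewrite !sC_cnext /= => -[eq_next eq_j]; subst j'; congr pair.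
exact: (@cnext_inj m (fun i => F (i, j)) _ _ lt_i_m lt_i'_m Fc Fc').
Qed.

Lemma bishop_closed c : F c -> F (bishop m n F c).
Proof. by move=> Fc; apply/sC_closed/sR_closed. Qed.

Lemma bishop_inj : {in F &, injective (bishop m n F)}.
Proof.
move=> c c' Fc Fc' eq_bishop; apply: sR_inj => //.
by apply: sC_inj => //; apply: sR_closed.
Qed.

Lemma bishop_reach_sym c c' :
  F c -> reach (bishop m n F) c c' -> reach (bishop m n F) c' c.
Proof.
apply: (@reach_sym _ _ _ [seq (i, j) | i <- iota 0 m, j <- iota 0 n]).
- move=> [i j] /F_box [lt_i_m lt_j_n]; apply/allpairsP; exists (i, j).
  by rewrite !mem_iota.
- exact: bishop_closed.
- exact: bishop_inj.
Qed.

Hypothesis row0_full : forall j, j < n -> F (0, j).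

Lemma sC_row c : F c -> (sC m n F c).1 = 0 \/ c.1 < (sC m n F c).1.
Proof.
case: c => i j Fc; rewrite sC_cnext; have [/= lt_i_m lt_j_n] := F_box Fc.
have [t t_range [-> _ before_t]] := @cnextP m (fun i => F (i, j)) i lt_i_m Fc.
have [lt_it_m | ge_it_m] := ltnP (i + t) m; first by right; rewrite /= modn_small; lia.
have wrap_t : t = m - i.
  apply/eqP; rewrite eqn_leq; apply/andP; split; last by lia.
  rewrite leqNgt; apply/negP => lt_t.
  by have := before_t (m - i); rewrite subnKC ?modnn ?row0_full //; lia.
by left; rewrite wrap_t subnKC ?modnn // ltnW.
Qed.

Lemma reach_row0 c : F c -> exists2 j, j < n & reach (bishop m n F) c (0, j).
Proof.
have [k le_k] : exists k, m - c.1 <= k by exists (m - c.1).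
elim: k c le_k => [|k IHk] [i j] /= le_k Fc; have [/= lt_i_m lt_j_n] := F_box Fc.
  by lia.
have Fc' := bishop_closed Fc; have [_ lt_j'_n] := F_box Fc'.
have [row0 | next_row] := sC_row (sR_closed Fc).
  exists (bishop m n F (i, j)).2 => //; rewrite -row0 -surjective_pairing.
  exact: reach_step.
have row_gt : i < (bishop m n F (i, j)).1 by move: next_row; rewrite sR_cnext.
have [|j' lt_j' reach_j'] := IHk _ _ Fc'; first by lia.
by exists j' => //; apply: reach_trans reach_j'; apply: reach_step.
Qed.

Lemma bishop_transitive :
  (forall j, j < n -> reach (bishop m n F) (0, 0) (0, j)) ->
  forall c c', F c -> F c' -> reach (bishop m n F) c c'.
Proof.
move=> row0_orbit c c' Fc Fc'.
have F00 : F (0, 0) by apply: row0_full; have [_] := F_box Fc; lia.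
have to_origin c'' : F c'' -> reach (bishop m n F) c'' (0, 0).
  move=> Fc''; have [j lt_j_n reach_j] := reach_row0 Fc''; apply: reach_trans reach_j _.
  exact: bishop_reach_sym F00 (row0_orbit j lt_j_n).
apply: reach_trans (to_origin c Fc) _.
exact: bishop_reach_sym Fc' (to_origin c' Fc').
Qed.

End BishopPermutation.

Lemma bishop_is_solution m n (F : pred cell) :
  (forall c, F c -> c.1 < m /\ c.2 < n) ->
  (forall c c', F c -> F c' -> reach (bishop m n F) c c') ->
  is_solution F (bishop m n F).
Proof. by move=> F_box; split; [exact: bishop_closed | exact: bishop_inj |]. Qed.

Lemma modn_subn x n : n <= x < n + n -> x %% n = x - n.
Proof.
by move=> x_range; rewrite -[in LHS](subnK (_ : n <= x)) ?modnDr ?modn_small; lia.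
Qed.

Lemma filledA_box m n a b left c : filledA m n a b left c -> c.1 < m /\ c.2 < n.
Proof. by case/and3P. Qed.

(* Columns whose diagonal meets the empty block are exactly those landing in
   [0, a + b), and the block rotates them by b. *)
Definition row0_return (m n a b j : nat) : nat :=
  let u := (j + m) %% n in if u < a + b then (u + b) %% (a + b) else u.

Section LeftBlock.

Variables m n a b : nat.
Hypotheses (a_range : 0 < a < m) (b_range : 0 < b < n).

Local Notation F := (filledA m n a b true).
Local Notation f := (bishop m n F).

Lemma bishop_upper i j : i.+1 < m - a -> f (i, j) = (i.+1, (j + 1) %% n).
Proof.
move=> lt_i; have lt_c_n : (j + 1) %% n < n by rewrite ltn_pmod; lia.
have F_right : F (i, (j + 1) %% n) by rewrite /filledA /=; lia.
have F_down : F ((i + 1) %% m, (j + 1) %% n) by rewrite /filledA /= modn_small; lia.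
rewrite /bishop sR_cnext /= cnext_succ //; last by lia.
rewrite sC_cnext /= cnext_succ //; last by lia.
by rewrite modn_small ?addn1 //; lia.
Qed.

Lemma bishop_last_upper j :
  f ((m - a).-1, j) = (if (j + 1) %% n < b then 0 else m - a, (j + 1) %% n).
Proof.
have lt_c_n : (j + 1) %% n < n by rewrite ltn_pmod; lia.
have F_right : F ((m - a).-1, (j + 1) %% n) by rewrite /filledA /=; lia.
have wrap : (m - a).-1 + a.+1 = m by lia.
rewrite /bishop sR_cnext /= cnext_succ //; last by lia.
rewrite sC_cnext /=; case: ifP => lt_c_b.
- have F_top : F (((m - a).-1 + a.+1) %% m, (j + 1) %% n).
    by rewrite /filledA /= wrap modnn; lia.
  have skip s : 0 < s < a.+1 -> ~~ F (((m - a).-1 + s) %% m, (j + 1) %% n).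
    by move=> s_range; rewrite /filledA /= modn_small; lia.
  by rewrite (@cnext_eq _ _ _ a.+1) // ?wrap ?modnn //; lia.
- have F_down : F (((m - a).-1 + 1) %% m, (j + 1) %% n).
    by rewrite /filledA /= modn_small; lia.
  rewrite cnext_succ //; last by lia.
  by rewrite modn_small; [congr pair|]; lia.
Qed.

Lemma bishop_lower i e : m - a <= i < m -> e < n - b ->
  f (i, b + e) = ((i + 1) %% m, b + (e + 1) %% (n - b)).
Proof.
move=> i_range lt_e; have [lt_e1 | eq_e1] := ltnP (e + 1) (n - b).
- have F_right : F (i, (b + e + 1) %% n) by rewrite /filledA /= !modn_small; lia.
  have F_down : F ((i + 1) %% m, (b + e + 1) %% n).
    by rewrite /filledA /= !ltn_pmod ?(@modn_small (b + e + 1)); lia.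
  rewrite /bishop sR_cnext /= cnext_succ //; last by lia.
  rewrite sC_cnext /= cnext_succ //; last by lia.
  by congr pair; rewrite !modn_small; lia.
- have col_b : (b + e + b.+1) %% n = b by rewrite modn_subn; lia.
  have F_right : F (i, (b + e + b.+1) %% n) by rewrite /filledA /= col_b; lia.
  have skip s : 0 < s < b.+1 -> ~~ F (i, (b + e + s) %% n).
    by move=> s_range; rewrite /filledA /= modn_subn; lia.
  have F_down : F ((i + 1) %% m, (b + e + b.+1) %% n).
    by rewrite /filledA /= col_b ltnn andbF ltn_pmod //; lia.
  rewrite /bishop sR_cnext /= (@cnext_eq _ _ _ b.+1) //; last by lia.
  rewrite sC_cnext /= cnext_succ //; last by lia.
  by rewrite col_b (_ : e + 1 = n - b) ?modnn ?addn0 //; lia.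
Qed.

Lemma iter_upper j k : j < n -> k < m - a -> iter k f (0, j) = (k, (j + k) %% n).
Proof.
move=> lt_j_n; elim: k => [|k IHk] lt_k /=; first by rewrite addn0 modn_small.
rewrite IHk ?bishop_upper //; last by lia.
by rewrite modnDml -addnA addn1.
Qed.

Lemma iter_leave_upper j : j < n ->
  iter (m - a) f (0, j) =
    (if (j + (m - a)) %% n < b then 0 else m - a, (j + (m - a)) %% n).
Proof.
move=> lt_j_n; rewrite -[in LHS](prednK (_ : 0 < m - a)); last by lia.
rewrite iterS iter_upper ?bishop_last_upper ?modnDml -?addnA ?addn1 ?prednK //; lia.
Qed.

Lemma iter_lower e s : e < n - b -> s <= a ->
  iter s f (m - a, b + e) = ((m - a + s) %% m, b + (e + s) %% (n - b)).
Proof.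
move=> lt_e; elim: s => [|s IHs] le_s /=; first by rewrite !addn0 !modn_small //; lia.
have lt_es : (e + s) %% (n - b) < n - b by rewrite ltn_pmod; lia.
rewrite IHs ?(@modn_small (m - a + s)) ?bishop_lower //; try lia.
by rewrite modnDml -!addnA !addn1.
Qed.

(* After m - a moves the bishop is at column c = j + m - a; if c < b the block
   sends it straight back to row 0, otherwise it crosses the a block rows on
   the right of the block. *)
Lemma reach_row0_return j : a + b <= n -> j < n ->
  reach f (0, j) (0, row0_return m n a b j).
Proof.
move=> le_ab_n lt_j_n; set c := (j + (m - a)) %% n.
have lt_c_n : c < n by rewrite ltn_pmod; lia.
have u_def : (j + m) %% n = (c + a) %% n by rewrite modnDml -addnA subnK //; lia.
rewrite /row0_return u_def; have [lt_c_b | ge_c_b] := ltnP c b.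
  exists (m - a); rewrite iter_leave_upper // -/c lt_c_b.
  by rewrite modn_small ?ifT -?addnA ?modnDr ?modn_small //; lia.
exists (a + (m - a)); rewrite iterD iter_leave_upper // -/c ifN; last by lia.
have := @iter_lower (c - b) a _ (leqnn a); rewrite subnKC // => -> //; last by lia.
rewrite subnK ?modnn; last by lia.
congr pair; have [lt_ca_n | ge_ca_n] := ltnP (c + a) n.
  by rewrite (@modn_small (c + a)) // ifN ?modn_small; lia.
by rewrite (@modn_subn (c + a)) ?ifT ?(@modn_small (c + a - n + b))
           ?(@modn_subn (c - b + a)); lia.
Qed.

Lemma reach_iter_row0_return k : a + b <= n ->
  reach f (0, 0) (0, iter k (row0_return m n a b) 0).
Proof.
move=> le_ab_n; elim: k => [|k IHk]; first exact: reach_refl.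
apply: reach_trans IHk (reach_row0_return _ _) => //.
case: k => [|k] /=; first by lia.
rewrite /row0_return; case: ifP => _; last by rewrite ltn_pmod; lia.
by apply: leq_trans le_ab_n; rewrite ltn_pmod; lia.
Qed.

End LeftBlock.

Lemma coprime_mulmod_onto p q r : coprime p q -> exists k, k * p = r %[mod q].
Proof.
case: p => [|p] cop_pq.
  by exists 0; move: cop_pq; rewrite /coprime gcd0n => /eqP->; rewrite !modn1.
have [km kn km_def _] := egcdnP q (ltn0Sn p).
exists (km * r); rewrite mulnAC km_def (eqP cop_pq) mulnDl mul1n mulnAC.
by rewrite modnMDl.
Qed.

Lemma modn_addMl_small r x d k : 0 < k -> r < d ->
  (r + x * d) %% (k * d) = r + x %% k * d.
Proof.
move=> k_gt0 lt_r_d; rewrite {1}(divn_eq x k) mulnDl -mulnA addnCA modnMDl.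
rewrite modn_small //; move: (x %% k) (ltn_pmod x k_gt0) => q lt_q_k; nia.
Qed.

Section ReturnMap.

Variables m n a b m' n' : nat.
Hypotheses (m_def : m = m' * (a + b)) (n_def : n = n' * (a + b)).
Hypotheses (n'_gt0 : 0 < n') (b_gt0 : 0 < b).
Hypotheses (cop_mn : coprime m' n') (cop_ab : coprime a b).

Local Notation d := (a + b).
Local Notation rho := (row0_return m n a b).

Lemma iter_row0_return_small r k : r < d -> k < n' -> iter k rho r = (r + k * m) %% n.
Proof.
move=> lt_r_d; elim: k => [|k IHk] lt_k.
  by rewrite mul0n addn0 modn_small // n_def (leq_trans lt_r_d) ?leq_pmull.
have step_nz : 0 < k.+1 * m' %% n'.
  rewrite lt0n -/(dvdn _ _) Gauss_dvdl 1?coprime_sym //.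
  by apply/negP => /dvdn_leq; lia.
rewrite iterS IHk 1?ltnW // /row0_return modnDml -addnA -mulSnr ifN // -leqNgt.
by rewrite m_def n_def mulnA modn_addMl_small //; nia.
Qed.

Lemma iter_row0_return_period r : r < d -> iter n' rho r = (r + b) %% d.
Proof.
move=> lt_r_d; rewrite -(prednK n'_gt0) iterS iter_row0_return_small ?prednK //.
rewrite /row0_return modnDml -addnA -mulSnr prednK //.
have -> : n' * m = m' * n by rewrite m_def n_def mulnCA.
rewrite addnC modnMDl modn_small ?lt_r_d //.
by rewrite n_def (leq_trans lt_r_d) ?leq_pmull.
Qed.

Lemma iter_row0_return_mul k : iter (k * n') rho 0 = (k * b) %% d.
Proof.
elim: k => [|k IHk]; first by rewrite mod0n.
rewrite mulSn iterD IHk iter_row0_return_period ?ltn_pmod ?addn_gt0 ?b_gt0 ?orbT //.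
by rewrite modnDml mulSnr.
Qed.

Lemma row0_return_orbit j : j < n -> exists k, iter k rho 0 = j.
Proof.
move=> lt_j_n; have d_gt0 : 0 < d by rewrite addn_gt0 b_gt0 orbT.
have cop_bd : coprime b d by rewrite /coprime gcdnDr gcdnC.
have [k1 k1_def] := coprime_mulmod_onto (j %% d) cop_bd.
have [k2 k2_def] := coprime_mulmod_onto (j %/ d) cop_mn.
exists (k2 %% n' + k1 * n').
rewrite iterD iter_row0_return_mul k1_def modn_mod iter_row0_return_small ?ltn_pmod //.
rewrite m_def n_def mulnA modn_addMl_small ?ltn_pmod // modnMml k2_def.
have lt_q : j %/ d < n' by rewrite ltn_divLR // -n_def.
by rewrite (modn_small lt_q) addnC -divn_eq.
Qed.

End ReturnMap.

Definition col_shift (n s : nat) (c : cell) : cell := (c.1, (c.2 + s) %% n).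

Lemma col_shift_inj n s c c' : c.2 < n -> c'.2 < n ->
  col_shift n s c = col_shift n s c' -> c = c'.
Proof.
case: c c' => [i j] [i' j'] /= lt_j lt_j' [-> /eqP].
by rewrite eqn_modDr !modn_small // => /eqP->.
Qed.

Section ColumnShift.

Variables (m n s : nat) (F G : pred cell).
Hypothesis n_gt0 : 0 < n.
Hypothesis F_box : forall c, F c -> c.1 < m /\ c.2 < n.
Hypothesis G_def : forall c, G c = (c.2 < n) && F (col_shift n s c).

Lemma bishop_col_shift c :
  col_shift n s (bishop m n G c) = bishop m n F (col_shift n s c).
Proof.
case: c => i j.
have col_eq :
    cnext n (fun j' => F (i, (j' + s) %% n)) j = cnext n (fun j' => G (i, j')) j.
  by apply: cnext_ext => j'; rewrite inE G_def /= => ->.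
rewrite /bishop /col_shift !sR_cnext cnext_shift col_eq !sC_cnext /=; congr pair.
by apply: cnext_ext => i' _; rewrite G_def /= cnext_lt.
Qed.

Lemma reach_col_shift c c' : G c -> G c' ->
  reach (bishop m n F) (col_shift n s c) (col_shift n s c') ->
  reach (bishop m n G) c c'.
Proof.
have G_box c'' : G c'' -> c''.1 < m /\ c''.2 < n.
  by rewrite G_def => /andP[lt_c2 /F_box[lt_c1 _]].
move=> Gc Gc' [k iter_k]; exists k.
have iter_shift :
    col_shift n s (iter k (bishop m n G) c) = iter k (bishop m n F) (col_shift n s c).
  by elim: k {iter_k} => //= k IHk; rewrite bishop_col_shift IHk.
have [_ lt_k_n] := G_box _ (iter_closed (bishop_closed G_box) k Gc).
have [_ lt_c'_n] := G_box _ Gc'.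
by apply: (col_shift_inj (s := s) lt_k_n lt_c'_n); rewrite iter_shift.
Qed.

End ColumnShift.

Lemma filledA_right m n a b c : b < n ->
  filledA m n a b false c = (c.2 < n) && filledA m n a b true (col_shift n b c).
Proof.
case: c => i j lt_b_n; rewrite /filledA /col_shift /=.
have [lt_j_n | ge_j_n] := ltnP j n; last by rewrite andbF.
rewrite ltn_pmod /=; last by lia.
have [lt_jb_n | ge_jb_n] := ltnP (j + b) n.
  by rewrite modn_small //; lia.
by rewrite modn_subn; lia.
Qed.

Lemma filledA_left_transitive m n a b : 0 < a < m -> 0 < b < n ->
  gcdn m n = a + b -> gcdn a b = 1 ->
  forall c c', filledA m n a b true c -> filledA m n a b true c' ->
  reach (bishop m n (filledA m n a b true)) c c'.
Proof.
move=> a_range b_range gcd_mn cop_ab.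
have [m' m_def] : exists m', m = m' * (a + b).
  by apply/dvdnP; rewrite -gcd_mn dvdn_gcdl.
have [n' n_def] : exists n', n = n' * (a + b).
  by apply/dvdnP; rewrite -gcd_mn dvdn_gcdr.
have n'_gt0 : 0 < n' by nia.
have cop_mn' : coprime m' n'.
  rewrite /coprime -(eqn_pmul2r (_ : 0 < a + b)) ?mul1n ?muln_gcdl; last by lia.
  by rewrite -m_def -n_def gcd_mn.
apply: bishop_transitive => [c /filledA_box // | j lt_j_n | j lt_j_n].
  by rewrite /filledA /=; lia.
have b_gt0 : 0 < b by lia.
have [k <-] :=
  row0_return_orbit m_def n_def n'_gt0 b_gt0 cop_mn' (introT eqP cop_ab) lt_j_n.
by apply: reach_iter_row0_return => //; rewrite n_def leq_pmull.
Qed.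

Theorem lemma4p12 (m n a b : nat) (left : bool) :
  0 < a < m -> 0 < b < n ->
  gcdn m n = a + b -> gcdn a b = 1 ->
  is_solution (filledA m n a b left) (bishop m n (filledA m n a b left)).
Proof.
move=> a_range b_range gcd_mn cop_ab.
have left_transitive := filledA_left_transitive a_range b_range gcd_mn cop_ab.
apply: bishop_is_solution => [c /filledA_box // |].
case: left; first exact: left_transitive.
have lt_b_n : b < n by case/andP: b_range.
move=> c c' Gc Gc'.
apply: (reach_col_shift (s := b) _ (filledA_box (left := true))) => //.
- by lia.
- by move=> c''; apply: filledA_right.
rewrite !filledA_right // in Gc Gc'.
by apply: left_transitive; [case/andP: Gc | case/andP: Gc'].
Qed.
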